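(* In a symmetric instance with $k$ signals ($2\le k\le n$), a symmetric scheme $\varphi$ is persuasive if and only if $u_{\mathcal R}(\varphi)\ge\rho_E$, where $u_{\mathcal R}(\varphi)$ is the receiver's expected utility when she follows the recommendations of $\varphi$.
   Context: Model: a receiver chooses one of the actions $[n]$; each action $i$ has a type $\theta_i$; the state $\boldsymbol\theta=(\theta_1,\dots,\theta_n)$ is drawn from a commonly known distribution $q$ over a finite set of type vectors; each type $t$ has receiver value $\rho(t)$ and sender value $\xi(t)$. A direct scheme with $k$ signals maps each state to a distribution over $k$ signals, each signal recommending an action; it is persuasive if for every signal $\sigma$ sent with positive probability and recommending $i$, $\mathbb E[\rho(\theta_i)\mid\sigma]\ge\mathbb E[\rho(\theta_j)\mid\sigma]$ for all $j\in[n]$. $\rho_E=\max_i\sum_{\boldsymbol\theta}q_{\boldsymbol\theta}\rho(\theta_i)$. Symmetric instance: $q_{\boldsymbol\theta}=q_{\boldsymbol\theta'}$ whenever $\boldsymbol\theta'$ is a permutation of $\boldsymbol\theta$. For a permutation $\pi$ of $[n]$ let $(\pi\cdot\boldsymbol\theta)_{\pi(l)}=\theta_l$. A symmetric scheme is a direct scheme with $k$ signals whose signals recommend the distinct actions $1,\dots,k$ and which satisfies $\varphi(\pi\cdot\boldsymbol\theta,\pi(i))=\varphi(\boldsymbol\theta,i)$ for every state $\boldsymbol\theta$, every $i\in[k]$ and every permutation $\pi$ of $[n]$ with $\pi([k])=[k]$ (here $\varphi(\boldsymbol\theta,i)$ is the probability of recommending $i$ in state $\boldsymbol\theta$). *)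

From HB Require Import structures.
From mathcomp Require Import all_boot all_order all_algebra all_fingroup.
Set Implicit Arguments. Unset Strict Implicit. Unset Printing Implicit Defensive.
Import Order.TTheory GRing.Theory Num.Theory.
Local Open Scope ring_scope.

Section Persuasion.
Variables (R : realFieldType) (T : finType) (n : nat).

(* a state = type vector (theta_1, ..., theta_n); actions are 'I_n *)
Definition state := {ffun 'I_n -> T}.

Definition permute (pi : {perm 'I_n}) (th : state) : state :=
  [ffun m => th ((pi^-1)%g m)].

Definition is_distr (q : state -> R) :=
  (forall th, 0 <= q th) /\ \sum_(th : state) q th = 1.

Definition symmetric_instance (q : state -> R) :=
  forall (pi : {perm 'I_n}) (th : state), q (permute pi th) = q th.

(* A symmetric scheme with k signals: signal i recommends action i, i < k.
   phi th a = probability of recommending action a in state th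
   (zero for a >= k). *)
Definition symmetric_scheme (k : nat) (phi : state -> 'I_n -> R) :=
  [/\ (forall th a, 0 <= phi th a),
      (forall th, \sum_(a < n) phi th a = 1),
      (forall th (a : 'I_n), (k <= a)%N -> phi th a = 0) &
      (forall th (i : 'I_n) (pi : {perm 'I_n}), (i < k)%N ->
         pi @: [set a : 'I_n | (a < k)%N] = [set a : 'I_n | (a < k)%N] ->
         phi (permute pi th) (pi i) = phi th i)].

Definition sig_prob (q : state -> R) (phi : state -> 'I_n -> R) (i : 'I_n) :=
  \sum_(th : state) q th * phi th i.

Definition cond_exp (q : state -> R) (rho : T -> R) (phi : state -> 'I_n -> R)
    (i j : 'I_n) :=
  (\sum_(th : state) q th * phi th i * rho (th j)) / sig_prob q phi i.

Definition persuasive (q : state -> R) (rho : T -> R) (k : nat)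
    (phi : state -> 'I_n -> R) :=
  forall i : 'I_n, (i < k)%N -> 0 < sig_prob q phi i ->
    forall j : 'I_n, cond_exp q rho phi i j <= cond_exp q rho phi i i.

Definition uR (q : state -> R) (rho : T -> R) (phi : state -> 'I_n -> R) :=
  \sum_(th : state) q th * \sum_(i < n) phi th i * rho (th i).

Definition exp_val (q : state -> R) (rho : T -> R) (i : 'I_n) :=
  \sum_(th : state) q th * rho (th i).

(* rho_E = max_i E[rho(theta_i)] (set to 0 if there are no actions) *)
Definition rhoE (q : state -> R) (rho : T -> R) : R :=
  match [pick i : 'I_n] with
  | Some i0 => \big[Num.max/exp_val q rho i0]_(i < n) exp_val q rho i
  | None => 0
  end.

End Persuasion.

From HB Require Import structures.
From mathcomp Require Import all_boot all_order all_algebra all_fingroup.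
From mathcomp Require Import lra.
Import Order.TTheory GRing.Theory Num.Theory.
Set Implicit Arguments. Unset Strict Implicit. Unset Printing Implicit Defensive.
Local Open Scope ring_scope.

(* Write  J h i j = E[ phi(theta, i) * h(theta_j) ]  for the joint
   moment of "signal i is sent" and the value h of action j.  Every transposition
   of two recommended actions (both < k) preserves q and phi, hence J; so for
   i, i' < k the diagonal moments J i i are all equal to some A, and J i j depends
   only on whether j is recommended.  Since phi(theta, .) is a distribution,
   summing J i j over the signals i gives the prior expectation E[rho(theta_j)],
   which by symmetry of q is the same value rho_E for every j.  This yields
     rho_E = D *+ k + (A - D)  (D = J i j, i <> j both < k),
     rho_E = D' *+ k           (D' = J i j, i < k <= j),
     u_R   = A *+ k.
   All signals are sent with positive probability, so persuasiveness says exactly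
   D <= A and D' <= A, while u_R >= rho_E says  D *+ k + (A - D) <= A *+ k, i.e.
   D <= A because k >= 2; and then D' *+ k = D *+ k + (A - D) <= A *+ k too. *)

Lemma permute_inj {T : finType} {n : nat} (pi : {perm 'I_n}) :
  injective (@permute T n pi).
Proof.
move=> th th' eq_th; apply/ffunP => m.
have := congr1 (fun f : state T n => f (pi m)) eq_th.
by rewrite /permute !ffunE permK.
Qed.
Arguments permute_inj {T n} pi.

Lemma permute_perm {T : finType} {n : nat} (pi : {perm 'I_n}) (th : state T n) j :
  permute pi th (pi j) = th j.
Proof. by rewrite /permute ffunE permK. Qed.

Lemma tperm_stable (n k : nat) (x y : 'I_n) : (x < k)%N -> (y < k)%N ->
  tperm x y @: [set a : 'I_n | (a < k)%N] = [set a : 'I_n | (a < k)%N].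
Proof.
move=> xk yk; apply/setP => z; rewrite inE; apply/imsetP/idP.
  by case=> a; rewrite inE => ak ->; case: tpermP.
move=> zk; exists (tperm x y z); last by rewrite tpermK.
by rewrite inE; case: tpermP.
Qed.

Lemma sum_first_const (R : realFieldType) (n k : nat) (f : 'I_n -> R) (c : R) :
  (k <= n)%N -> (forall i : 'I_n, (i < k)%N -> f i = c) ->
  (forall i : 'I_n, (k <= i)%N -> f i = 0) -> \sum_(i < n) f i = c *+ k.
Proof.
move=> kn f_in f_out.
rewrite (eq_bigr (fun i : 'I_n => if (i < k)%N then c else 0)); last first.
  by move=> i _; case: ltnP => [/f_in | /f_out].
rewrite -big_mkcond /= -(big_ord_widen _ (fun _ => c) kn) /=.
by rewrite sumr_const card_ord.
Qed.

(* The arithmetic core: for k >= 2, the inequality A *+ k >= D *+ k + (A - D)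
   (i.e. (k - 1) (A - D) >= 0) is equivalent to D <= A. *)
Lemma mixed_le_iff (R : realFieldType) (k : nat) (A D : R) : (2 <= k)%N ->
  (D *+ k + (A - D) <= A *+ k) = (D <= A).
Proof.
move=> k2; have : (2%:R : R) <= k%:R by rewrite ler_nat.
rewrite -[D *+ k]mulr_natr -[A *+ k]mulr_natr; set kk := (k%:R : R) => k2R.
by apply/idP/idP => le; nra.
Qed.

Lemma exp_val_sym (R : realFieldType) (T : finType) (n : nat) (q : state T n -> R)
    (rho : T -> R) (i j : 'I_n) :
  symmetric_instance q -> exp_val q rho i = exp_val q rho j.
Proof.
move=> q_sym; rewrite /exp_val (reindex_inj (permute_inj (tperm i j))) /=.
by apply: eq_bigr => th _; rewrite q_sym /permute ffunE tpermV tpermL.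
Qed.

Lemma rhoE_sym (R : realFieldType) (T : finType) (n : nat) (q : state T n -> R)
    (rho : T -> R) (j : 'I_n) :
  symmetric_instance q -> rhoE q rho = exp_val q rho j.
Proof.
move=> q_sym; rewrite /rhoE; case: pickP => [i0 _|no_action]; last by have := no_action j.
apply: (big_ind (fun x => x = exp_val q rho j)) => [||i _]; try exact: exp_val_sym.
by move=> x y -> ->; rewrite maxxx.
Qed.

Section SymmetricScheme.
Variables (R : realFieldType) (T : finType) (n k : nat).
Variables (q : state T n -> R) (phi : state T n -> 'I_n -> R).
Hypothesis q_sym : symmetric_instance q.
Hypothesis phi_sym : symmetric_scheme k phi.

Definition joint (h : T -> R) (i j : 'I_n) : R :=
  \sum_(th : state T n) q th * phi th i * h (th j).

(* Swapping two recommended actions x, y < k is a symmetry of both the prior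
   and the scheme, hence of every joint moment. *)
Lemma joint_tperm (h : T -> R) (x y i j : 'I_n) :
  (x < k)%N -> (y < k)%N -> (i < k)%N ->
  joint h (tperm x y i) (tperm x y j) = joint h i j.
Proof.
case: phi_sym => _ _ _ phi_perm xk yk ik.
rewrite /joint (reindex_inj (permute_inj (tperm x y))) /=.
by apply: eq_bigr => th _; rewrite q_sym phi_perm ?tperm_stable // permute_perm.
Qed.

Lemma joint_unsent (h : T -> R) (i j : 'I_n) : (k <= i)%N -> joint h i j = 0.
Proof.
case: phi_sym => _ _ phi_out _ ki.
by rewrite /joint big1 // => th _; rewrite phi_out // mulr0 mul0r.
Qed.

Lemma joint_diag (h : T -> R) {i i' : 'I_n} : (i < k)%N -> (i' < k)%N ->
  joint h i' i' = joint h i i.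
Proof. by move=> ik i'k; rewrite -(joint_tperm h i ik i'k ik) tpermL. Qed.

Lemma joint_offdiag (h : T -> R) {i i' j : 'I_n} : (i < k)%N -> (i' < k)%N ->
  j != i -> j != i' -> joint h i' j = joint h i j.
Proof.
move=> ik i'k ji ji'; rewrite -(joint_tperm h j ik i'k ik) tpermL.
by rewrite tpermD // eq_sym.
Qed.

Lemma exp_val_joint (rho : T -> R) (j : 'I_n) :
  exp_val q rho j = \sum_(i < n) joint rho i j.
Proof.
case: phi_sym => _ phi_sum _ _; rewrite /exp_val /joint exchange_big /=.
by apply: eq_bigr => th _; rewrite -big_distrl -big_distrr /= phi_sum mulr1.
Qed.

Lemma uR_joint (rho : T -> R) : uR q rho phi = \sum_(i < n) joint rho i i.
Proof.
rewrite /uR /joint exchange_big /=; apply: eq_bigr => th _.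
by rewrite big_distrr /=; apply: eq_bigr => i _; rewrite mulrA.
Qed.

Lemma sig_prob_joint (i : 'I_n) : sig_prob q phi i = joint (fun=> 1) i i.
Proof. by apply: eq_bigr => th _; rewrite mulr1. Qed.

Hypothesis k_le_n : (k <= n)%N.

Lemma uR_diag (rho : T -> R) (i : 'I_n) : (i < k)%N ->
  uR q rho phi = joint rho i i *+ k.
Proof.
move=> ik; rewrite uR_joint; apply: sum_first_const => // [i' i'k|i' ki'].
  exact: joint_diag.
exact: joint_unsent.
Qed.

Lemma exp_val_recommended (rho : T -> R) (i j : 'I_n) :
  (i < k)%N -> (j < k)%N -> i != j ->
  exp_val q rho j = joint rho i j *+ k + (joint rho i i - joint rho i j).
Proof.
move=> ik jk ij; set A := joint rho i i; set D := joint rho i j.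
have -> : A - D = \sum_(i' < n) (if i' == j then A - D else 0).
  by rewrite -big_mkcond big_pred1_eq.
rewrite exp_val_joint; apply/eqP; rewrite -subr_eq -sumrB; apply/eqP.
apply: sum_first_const => // i' i'k.
  case: eqVneq => [->|i'j]; first by rewrite (joint_diag _ ik jk) subKr.
  by rewrite subr0 (joint_offdiag _ ik) // eq_sym.
have -> : i' == j = false by apply/negbTE; apply: contraTneq i'k => ->; rewrite -ltnNge.
by rewrite joint_unsent // subr0.
Qed.

Lemma exp_val_unrecommended (rho : T -> R) (i j : 'I_n) :
  (i < k)%N -> (k <= j)%N -> exp_val q rho j = joint rho i j *+ k.
Proof.
move=> ik kj; rewrite exp_val_joint; apply: sum_first_const => // [i' i'k|i' ki'].
  by apply: joint_offdiag => //; apply: contraTneq kj => ->; rewrite -ltnNge.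
exact: joint_unsent.
Qed.

(* Every recommendation is sent with the same, hence positive, probability. *)
Lemma sig_prob_pos (i : 'I_n) : is_distr q -> (i < k)%N -> 0 < sig_prob q phi i.
Proof.
case=> q_ge0 q_sum ik; case: phi_sym => phi_ge0 phi_sum _ _.
have total : sig_prob q phi i *+ k = 1.
  rewrite -q_sum -(@sum_first_const _ _ k (sig_prob q phi)) //.
  - rewrite /sig_prob exchange_big /=; apply: eq_bigr => th _.
    by rewrite -big_distrr /= phi_sum mulr1.
  - by move=> i' i'k; rewrite !sig_prob_joint (joint_diag _ ik i'k).
  - by move=> i' ki'; rewrite sig_prob_joint joint_unsent.
have : 0 <= sig_prob q phi i by apply: sumr_ge0 => th _; exact: mulr_ge0.
rewrite le0r => /orP [/eqP p0|//]; move: total.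
by rewrite p0 mul0rn => /eqP; rewrite eq_sym oner_eq0.
Qed.

(* Since every signal is sent, obedience to signal i compares conditional
   expectations with the common positive denominator sig_prob i. *)
Lemma persuasive_joint (rho : T -> R) : is_distr q ->
  persuasive q rho k phi <->
  (forall i j : 'I_n, (i < k)%N -> joint rho i j <= joint rho i i).
Proof.
move=> q_distr; have pos (i : 'I_n) ik := sig_prob_pos q_distr ik.
have cond_le (i j : 'I_n) : (i < k)%N ->
    (cond_exp q rho phi i j <= cond_exp q rho phi i i) = (joint rho i j <= joint rho i i).
  by move=> ik; rewrite /cond_exp ler_pM2r // invr_gt0 pos.
split=> [obey i j ik | le i ik _ j]; first by rewrite -cond_le // obey ?pos.
by rewrite cond_le ?le.
Qed.

End SymmetricScheme.

Theorem lemma3p3 (R : realFieldType) (T : finType) (n k : nat)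
    (q : state T n -> R) (rho : T -> R) (phi : state T n -> 'I_n -> R) :
  (2 <= k)%N -> (k <= n)%N ->
  is_distr q -> symmetric_instance q ->
  symmetric_scheme k phi ->
  (persuasive q rho k phi <-> rhoE q rho <= uR q rho phi).
Proof.
move=> k2 kn q_distr q_sym phi_sym.
rewrite (persuasive_joint q_sym phi_sym kn rho q_distr); split=> [obey | le i j ik].
- (* compare actions 0 and 1, both recommended *)
  pose i0 : 'I_n := Ordinal (leq_trans (ltnW k2) kn).
  pose i1 : 'I_n := Ordinal (leq_trans k2 kn).
  have i0k : (i0 < k)%N := ltnW k2.
  have i1k : (i1 < k)%N := k2.
  rewrite (rhoE_sym rho i1 q_sym) (uR_diag q_sym phi_sym kn rho i0k).
  rewrite (exp_val_recommended q_sym phi_sym kn rho i0k i1k) // mixed_le_iff //.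
  exact: obey.
- rewrite (rhoE_sym rho j q_sym) (uR_diag q_sym phi_sym kn rho ik) in le.
  have [jk | kj] := ltnP j k.
  + have [<- // | ij] := eqVneq i j.
    by rewrite (exp_val_recommended q_sym phi_sym kn rho ik jk ij) mixed_le_iff in le.
  + rewrite (exp_val_unrecommended q_sym phi_sym kn rho ik kj) in le.
    by rewrite lerMn2r gtn_eqF ?(ltnW k2) in le.
Qed.
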